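(* Let $\rho$ be a probability distribution on $\mathcal S$ with $\min_i\rho_i>0$. Suppose $Y=(S,B,S')$ is random with $S\sim\rho$, $\mathbb P(S'=j\mid S=i)=P_{ij}$ and $B\mid(S=i,S'=j)\sim\nu_{ij}$ for all $i,j\in\mathcal S$. Then $\mathbb E[H(p,Y)]=h_\rho(p)$ for all $p\in\Delta_d^{\mathcal S}$ (expectation taken coordinatewise), $h_\rho$ is non-expansive in $\ell^\Theta_{\mathrm C,\infty}$, and $\mathrm{fix}(h_\rho)=\mathrm{fix}(\mathcal G)$. In particular, these conclusions hold with $\rho=\mu$.
   Context: Finite MDP with state set $\mathcal{S}=\{1,\dots,m\}$, finite action set, deterministic rewards in $[0,1]$, fixed policy inducing a transition matrix $P=(P_{ij})$ on $\mathcal S$ that is irreducible and aperiodic with stationary distribution $\mu$. $R_{ij}$ is the finite-valued random one-step reward conditioned on transition $i\to j$; gain $\bar r^\pi=\sum_i\mu_i\sum_jP_{ij}\mathbb E[R_{ij}]$; $\nu_{ij}:=\mathrm{Law}(R_{ij}-\bar r^\pi)$. $\Theta=\{\theta_1<\dots<\theta_d\}$ with constant stride $\Delta>0$; $\Delta_d$ the probability simplex of $\mathbb R^d$; $\Delta_d^{\mathcal S}$ families $(p_i)_{i\in\mathcal S}$ with $p_i\in\Delta_d$. For $u\in\Delta_d$, $\eta^{u,0}:=\sum_ku_k\delta_{\theta_k}$. Categorical projection $\Pi^\Theta_{\mathrm C}$: $\delta_x\mapsto\delta_{\theta_1}$ if $x\le\theta_1$, $\delta_{\theta_d}$ if $x\ge\theta_d$,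 $\frac{\theta_{k+1}-x}{\Delta}\delta_{\theta_k}+\frac{x-\theta_k}{\Delta}\delta_{\theta_{k+1}}$ if $\theta_k\le x\le\theta_{k+1}$, extended linearly to probability laws. For $b\in\mathbb R$, $L_bu\in\Delta_d$ is defined by $\Pi^\Theta_{\mathrm C}(\text{law of }X+b,\ X\sim\eta^{u,0})=\eta^{L_bu,0}$. $\mathcal G(p)$ is the unique $q\in\Delta_d^{\mathcal S}$ with $\eta^{q_i,0}=\Pi^\Theta_{\mathrm C}\bigl(\sum_jP_{ij}(\nu_{ij}\ast\eta^{p_j,0})\bigr)$ for all $i$. One-sample backup: for $y=(s,b,s')\in\mathcal S\times[-1,1]\times\mathcal S$, $H(p,y)=q$ with $q_u=p_u$ ($u\ne s$), $q_s=L_bp_{s'}$. Mean-field map $h_\rho(p)_i:=(1-\rho_i)p_i+\rho_i\mathcal G(p)_i$, i.e. $h_\rho(p)=p+D_\rho(\mathcal G(p)-p)$ with $D_\rho=\mathrm{diag}(\rho)$. $\mathrm{fix}(F)$ is the fixed-point set of $F$. Coordinate Cramér metric: $F_u(\theta_k):=\sum_{j\le k}u_j$, $\ell^\Theta_{\mathrm C}(u,v)^2:=\Delta\sum_{k=1}^{d-1}(F_u(\theta_k)-F_v(\theta_k))^2$, $\ell^\Theta_{\mathrm C,\infty}(p,q):=\max_i\ell^\Theta_{\mathrm C}(p_i,q_i)$. *)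

From HB Require Import structures.
From mathcomp Require Import all_boot all_order all_algebra.
From mathcomp Require Import reals.
Set Implicit Arguments. Unset Strict Implicit. Unset Printing Implicit Defensive.
Import Order.TTheory GRing.Theory Num.Theory.
Local Open Scope ring_scope.

Section Prop5Defs.
Variable R : realType.

Definition prob_vec (n : nat) (u : 'I_n -> R) :=
  (forall i, 0 <= u i) /\ \sum_i u i = 1.

Definition stochastic (m : nat) (P : 'M[R]_m) :=
  (forall i j, 0 <= P i j) /\ (forall i, \sum_j P i j = 1).

Definition irreducible (m : nat) (P : 'M[R]_m) :=
  forall i j : 'I_m, exists n : nat, 0 < (P ^+ n) i j.

Definition aperiodic (m : nat) (P : 'M[R]_m) :=
  forall (i : 'I_m) (k : nat),
    (forall n : nat, (0 < n)%N -> 0 < (P ^+ n) i i -> (k %| n)%N) -> k = 1%N.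

Definition stationary (m : nat) (P : 'M[R]_m) (mu : 'I_m -> R) :=
  prob_vec mu /\ (forall j, \sum_i mu i * P i j = mu j).

Definition fin_law (f : R -> R) (s : seq R) :=
  [/\ uniq s, (forall x, x \notin s -> f x = 0), (forall x, 0 <= f x)
    & \sum_(x <- s) f x = 1].

Definition mean (f : R -> R) (s : seq R) : R := \sum_(x <- s) x * f x.

Definition gain (m : nat) (P : 'M[R]_m) (mu : 'I_m -> R)
  (f : 'I_m -> 'I_m -> R -> R) (s : 'I_m -> 'I_m -> seq R) : R :=
  \sum_i mu i * \sum_j P i j * mean (f i j) (s i j).

(* nu_ij = Law(R_ij - rbar): mass function and support *)
Definition nu_mass (f : R -> R) (rbar : R) : R -> R := fun b => f (b + rbar).
Definition nu_supp (s : seq R) (rbar : R) : seq R := map (fun x => x - rbar) s.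

(* ---------- grid Theta = {theta_1 < ... < theta_d}, stride Delta;
   indexed from 0: theta_(k) = theta0 + k * Delta ---------- *)
Definition grid (theta0 Delta : R) (k : nat) : R := theta0 + k%:R * Delta.

(* weight put on the atom theta_k by the categorical projection of delta_x *)
Definition cproj_w (d : nat) (theta0 Delta : R) (x : R) (k : 'I_d) : R :=
  let th := grid theta0 Delta in
  if x <= th 0%N then ((k : nat) == 0%N)%:R
  else if th d.-1 <= x then ((k : nat) == d.-1)%:R
  else (if (th k <= x) && (x < th k.+1) then (th k.+1 - x) / Delta else 0)
     + (if [&& (0 < k)%N, th k.-1 <= x & x < th k]
        then (x - th k.-1) / Delta else 0).

(* L_b u : Pi_C(law of X + b, X ~ eta^{u,0}) = eta^{L_b u, 0} *)
Definition Lb (d : nat) (theta0 Delta b : R) (u : 'I_d -> R) : 'I_d -> R :=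
  fun k => \sum_(l < d) u l * cproj_w theta0 Delta (grid theta0 Delta l + b) k.

(* G(p)_i = Pi_C( sum_j P_ij (nu_ij * eta^{p_j,0}) ) *)
Definition Gop (m d : nat) (theta0 Delta : R) (P : 'M[R]_m)
  (nuf : 'I_m -> 'I_m -> R -> R) (nus : 'I_m -> 'I_m -> seq R)
  (p : 'I_m -> 'I_d -> R) : 'I_m -> 'I_d -> R :=
  fun i k => \sum_j P i j * \sum_(b <- nus i j) \sum_(l < d)
     nuf i j b * p j l * cproj_w theta0 Delta (b + grid theta0 Delta l) k.

Definition Hbackup (m d : nat) (theta0 Delta : R) (p : 'I_m -> 'I_d -> R)
  (y : 'I_m * R * 'I_m) : 'I_m -> 'I_d -> R :=
  let: (s, b, s') := y in
  fun u => if u == s then Lb theta0 Delta b (p s') else p u.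

Definition hrho (m d : nat) (theta0 Delta : R) (P : 'M[R]_m)
  (nuf : 'I_m -> 'I_m -> R -> R) (nus : 'I_m -> 'I_m -> seq R)
  (rho : 'I_m -> R) (p : 'I_m -> 'I_d -> R) : 'I_m -> 'I_d -> R :=
  fun i k => (1 - rho i) * p i k + rho i * Gop theta0 Delta P nuf nus p i k.

Definition simplexS (m d : nat) (p : 'I_m -> 'I_d -> R) :=
  forall i, prob_vec (p i).

Definition is_fix (m d : nat) (F : ('I_m -> 'I_d -> R) -> 'I_m -> 'I_d -> R)
  (p : 'I_m -> 'I_d -> R) := forall i k, F p i k = p i k.

Definition cdf (d : nat) (u : 'I_d -> R) (k : 'I_d) : R :=
  \sum_(j < d | (j <= k)%N) u j.
Definition lC (d : nat) (Delta : R) (u v : 'I_d -> R) : R :=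
  Num.sqrt (Delta * \sum_(k < d | (k < d.-1)%N) (cdf u k - cdf v k) ^+ 2).
Definition lCinf (m d : nat) (Delta : R) (p q : 'I_m -> 'I_d -> R) : R :=
  \big[Num.max/0]_(i < m) lC Delta (p i) (q i).

(* law of Y = (S, B, S'): finitely supported mass function qY with support sY,
   with S ~ rho, P(S'=j | S=i) = P_ij, B | (S=i, S'=j) ~ nu_ij, i.e.
   P(S=i, B=b, S'=j) = rho_i P_ij nu_ij({b}). *)
Definition Y_law (m : nat) (rho : 'I_m -> R) (P : 'M[R]_m)
  (nuf : 'I_m -> 'I_m -> R -> R)
  (qY : 'I_m * R * 'I_m -> R) (sY : seq ('I_m * R * 'I_m)) :=
  [/\ uniq sY, (forall y, y \notin sY -> qY y = 0), (forall y, 0 <= qY y),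
      \sum_(y <- sY) qY y = 1
    & forall i b j, qY (i, b, j) = rho i * P i j * nuf i j b].

Definition EH (m d : nat) (theta0 Delta : R) (qY : 'I_m * R * 'I_m -> R)
  (sY : seq ('I_m * R * 'I_m)) (p : 'I_m -> 'I_d -> R) : 'I_m -> 'I_d -> R :=
  fun u k => \sum_(y <- sY) qY y * Hbackup theta0 Delta p y u k.

Definition prop5_concl (m d : nat) (theta0 Delta : R) (P : 'M[R]_m)
  (nuf : 'I_m -> 'I_m -> R -> R) (nus : 'I_m -> 'I_m -> seq R)
  (rho : 'I_m -> R) :=
  [/\ (forall qY sY, Y_law rho P nuf qY sY ->
        forall p : 'I_m -> 'I_d -> R, simplexS p ->
        forall u k, EH theta0 Delta qY sY p u k
                    = hrho theta0 Delta P nuf nus rho p u k),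
      (forall p q : 'I_m -> 'I_d -> R, simplexS p -> simplexS q ->
        lCinf Delta (hrho theta0 Delta P nuf nus rho p)
                    (hrho theta0 Delta P nuf nus rho q)
        <= lCinf Delta p q)
    & (forall p : 'I_m -> 'I_d -> R, simplexS p ->
        (is_fix (hrho theta0 Delta P nuf nus rho) p
         <-> is_fix (Gop theta0 Delta P nuf nus) p))].

End Prop5Defs.

(* Only samples with [S = u] move coordinate [u]; they occur with probability
   [rho u] and their backups average to [G p u], whence [E H(p, Y) = h_rho p].
   For non-expansiveness, the categorical projection of a point mass at [x] has
   CDF [clamp01 ((theta_(k+1) - x) / Delta)] at [theta_k].  After an Abel
   summation, the CDF differences of [L_b u] and [L_b v] are those of [u] and
   [v] transformed by a nonnegative Toeplitz kernel with row and column sums at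
   most 1, so by the Schur test [L_b] does not increase the squared Cramer
   distance.  Convexity of the square carries this through the mixtures that
   define [G] and [h_rho], and then through the maximum over states.  Fixed
   points agree because [rho > 0]; finally, the stationary law of an irreducible
   chain charges every state, so [rho = mu] is admissible. *)

From HB Require Import structures.
From mathcomp Require Import all_boot all_order all_algebra.
From mathcomp Require Import reals.
From mathcomp Require Import ring lra.
Set Implicit Arguments. Unset Strict Implicit. Unset Printing Implicit Defensive.
Import Order.TTheory GRing.Theory Num.Theory.
Local Open Scope ring_scope.

Lemma big_uniq_supp (V : nmodType) (T : eqType) (s1 s2 : seq T) (g : T -> V) :
  uniq s1 -> uniq s2 -> (forall x, x \notin s1 -> g x = 0) ->
  (forall x, x \notin s2 -> g x = 0) ->
  \sum_(x <- s1) g x = \sum_(x <- s2) g x.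
Proof.
move=> s1_uniq s2_uniq g_s1 g_s2; apply: perm_big_supp.
apply: uniq_perm; rewrite ?filter_uniq // => x; rewrite !mem_filter.
have [//|gx_neq0] := eqVneq (g x) 0.
have in_supp (s : seq T) : (forall y, y \notin s -> g y = 0) -> x \in s.
  by move=> g_s; apply: contraT => /g_s/eqP; rewrite (negbTE gx_neq0).
by rewrite !in_supp.
Qed.

Lemma abel_summation (R : comPzRingType) (n : nat) (e G : nat -> R) :
  \sum_(l < n.+1) e l * G l =
  (\sum_(j < n.+1) e j) * G n + \sum_(l < n) (\sum_(j < l.+1) e j) * (G l - G l.+1).
Proof.
elim: n => [|n IHn]; first by rewrite !big_ord1 big_ord0; ring.
rewrite big_ord_recr IHn [in RHS]big_ord_recr [in X in _ = _ + X]big_ord_recr /=.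
ring.
Qed.

Section SquaredSums.
Variable R : realFieldType.

Lemma sqr_wsum_le (I : Type) (r : seq I) (w y : I -> R) :
  (forall i, 0 <= w i) -> \sum_(i <- r) w i <= 1 ->
  (\sum_(i <- r) w i * y i) ^+ 2 <= \sum_(i <- r) w i * y i ^+ 2.
Proof.
move=> w_ge0 w_le1; set M := \sum_(i <- r) w i * y i.
have W_ge0 : 0 <= \sum_(i <- r) w i by exact: sumr_ge0.
have var_ge0 : 0 <= \sum_(i <- r) w i * (y i - M) ^+ 2.
  by apply: sumr_ge0 => i _; rewrite mulr_ge0 ?sqr_ge0.
have var_eq : \sum_(i <- r) w i * (y i - M) ^+ 2 =
    \sum_(i <- r) w i * y i ^+ 2 - M ^+ 2 * (2 - \sum_(i <- r) w i).
  rewrite (eq_bigr (fun i => w i * y i ^+ 2 - 2 * M * (w i * y i) + M ^+ 2 * w i));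
    last by move=> i _; ring.
  by rewrite !big_split /= sumrN -!mulr_sumr -/M; ring.
rewrite var_eq in var_ge0.
have : M ^+ 2 <= M ^+ 2 * (2 - \sum_(i <- r) w i) by rewrite ler_peMr ?sqr_ge0 //; lra.
lra.
Qed.

Lemma schur_test_sqr (n : nat) (A : nat -> nat -> R) (x : nat -> R) :
  (forall k l, 0 <= A k l) ->
  (forall k, \sum_(l < n) A k l <= 1) -> (forall l, \sum_(k < n) A k l <= 1) ->
  \sum_(k < n) (\sum_(l < n) A k l * x l) ^+ 2 <= \sum_(k < n) x k ^+ 2.
Proof.
move=> A_ge0 A_row A_col.
apply: (@le_trans _ _ (\sum_(k < n) \sum_(l < n) A k l * x l ^+ 2)).
  by apply: ler_sum => k _; exact: sqr_wsum_le.
rewrite exchange_big /=; apply: ler_sum => l _.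
by rewrite -mulr_suml ler_piMl ?sqr_ge0.
Qed.

End SquaredSums.

Section CramerDistance.
Variables (R : realType) (d : nat).

Lemma cdf_nat (F : nat -> R) (k : 'I_d) :
  cdf (fun j : 'I_d => F j) k = \sum_(j < k.+1) F j.
Proof.
by rewrite (big_ord_widen _ F (ltn_ord k)); apply: eq_bigl => j; rewrite ltnS.
Qed.

Definition cramer_sq (u v : 'I_d -> R) : R :=
  \sum_(k < d | (k < d.-1)%N) (cdf u k - cdf v k) ^+ 2.

Lemma cdf_mixture (I : Type) (r : seq I) (w : I -> R) (u : I -> 'I_d -> R)
    (u' : 'I_d -> R) (k : 'I_d) :
  (forall l, u' l = \sum_(i <- r) w i * u i l) ->
  cdf u' k = \sum_(i <- r) w i * cdf (u i) k.
Proof.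
move=> u'E; rewrite /cdf (eq_bigr _ (fun l _ => u'E l)) exchange_big.
by apply: eq_bigr => i _; rewrite mulr_sumr.
Qed.

Lemma cramer_sq_ge0 (u v : 'I_d -> R) : 0 <= cramer_sq u v.
Proof. by apply: sumr_ge0 => k _; exact: sqr_ge0. Qed.

Lemma cramer_sq_mixture_le (I : Type) (r : seq I) (w : I -> R)
    (u v : I -> 'I_d -> R) (u' v' : 'I_d -> R) :
  (forall i, 0 <= w i) -> \sum_(i <- r) w i <= 1 ->
  (forall l, u' l = \sum_(i <- r) w i * u i l) ->
  (forall l, v' l = \sum_(i <- r) w i * v i l) ->
  cramer_sq u' v' <= \sum_(i <- r) w i * cramer_sq (u i) (v i).
Proof.
move=> w_ge0 w_le1 u'E v'E.
apply: (@le_trans _ _ (\sum_(k < d | (k < d.-1)%N)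
                         \sum_(i <- r) w i * (cdf (u i) k - cdf (v i) k) ^+ 2)).
  apply: ler_sum => k _; rewrite (cdf_mixture _ u'E) (cdf_mixture _ v'E) -sumrB.
  under eq_bigr do rewrite -mulrBr.
  exact: sqr_wsum_le.
rewrite exchange_big /=; under eq_bigr do rewrite -mulr_sumr.
exact: lexx.
Qed.

Lemma lCinf_le (m : nat) (Delta : R) (p q p' q' : 'I_m -> 'I_d -> R) : 0 < Delta ->
  (forall B, (forall j, cramer_sq (p j) (q j) <= B) ->
             forall i, cramer_sq (p' i) (q' i) <= B) ->
  lCinf Delta p' q' <= lCinf Delta p q.
Proof.
move=> Delta_gt0 propagate; set M := lCinf Delta p q.
have M_ge0 : 0 <= M by apply: bigmax_ge_id.
have cramer_le j : cramer_sq (p j) (q j) <= M ^+ 2 / Delta.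
  rewrite ler_pdivlMr // mulrC.
  have lC_le : lC Delta (p j) (q j) <= M by apply: le_bigmax.
  have lC_ge0 : 0 <= lC Delta (p j) (q j) by exact: sqrtr_ge0.
  have lC_sqr : lC Delta (p j) (q j) ^+ 2 = Delta * cramer_sq (p j) (q j).
    by rewrite sqr_sqrtr // mulr_ge0 ?(ltW Delta_gt0) // cramer_sq_ge0.
  by rewrite -lC_sqr !expr2 ler_pM.
apply: bigmax_le => // i _; rewrite /lC -[X in _ <= X]ger0_norm // -sqrtr_sqr.
rewrite ler_sqrt ?sqr_ge0 // -ler_pdivlMl // mulrC.
exact: propagate cramer_le i.
Qed.

End CramerDistance.

Ltac case_order_ifs :=
  repeat match goal with |- context [if ?c then _ else _] =>
    let rec split_cond c := match c with
      | ?a && ?b => split_cond a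
      | (?a <= ?b)%R => case: (leP a b) => ?
      | (?a < ?b)%R => case: (ltP a b) => ?
      end in
    split_cond c; rewrite ?andbT ?andbF ?andTb ?andFb /=
  end.

Section Clamp.
Variable R : realDomainType.

Definition clamp01 (z : R) : R := if z <= 0 then 0 else if z <= 1 then z else 1.

Lemma clamp01_ge0 z : 0 <= clamp01 z.
Proof. by rewrite /clamp01; case_order_ifs; lra. Qed.

Lemma clamp01_le1 z : clamp01 z <= 1.
Proof. by rewrite /clamp01; case_order_ifs; lra. Qed.

Lemma le_clamp01 : {homo clamp01 : z1 z2 / z1 <= z2}.
Proof. by move=> z1 z2 z12; rewrite /clamp01; case_order_ifs; lra. Qed.

Lemma clamp01_eq0 z : z <= 0 -> clamp01 z = 0.
Proof. by rewrite /clamp01 => ->. Qed.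

Lemma clamp01_eq1 z : 1 <= z -> clamp01 z = 1.
Proof. by rewrite /clamp01 => z_ge1; case_order_ifs; lra. Qed.

Lemma clamp01_sub_le1 z1 z2 : clamp01 z1 - clamp01 z2 <= 1.
Proof. by have := clamp01_le1 z1; have := clamp01_ge0 z2; lra. Qed.

End Clamp.

Section CategoricalProjection.
Variables (R : realType) (theta0 Delta : R).
Hypothesis Delta_gt0 : 0 < Delta.
Local Notation th := (grid theta0 Delta).

Lemma gridS j : th j.+1 = th j + Delta.
Proof. by rewrite /grid -addn1 natrD; ring. Qed.

Lemma grid_le : {homo th : a b / (a <= b)%N >-> a <= b}.
Proof. by move=> a b ab; rewrite /grid lerD2l ler_pM2r // ler_nat. Qed.

(* [cproj_w] with a [nat] index (it is convertible to [cproj_w] on ordinals),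
   so that its partial sums can be telescoped. *)
Definition proj_weight (d : nat) (x : R) (k : nat) : R :=
  if x <= th 0%N then (k == 0%N)%:R
  else if th d.-1 <= x then (k == d.-1)%:R
  else (if (th k <= x) && (x < th k.+1) then (th k.+1 - x) / Delta else 0)
     + (if [&& (0 < k)%N, th k.-1 <= x & x < th k]
        then (x - th k.-1) / Delta else 0).

Lemma proj_weight_interior d x j : th 0 < x -> x < th d.-1 ->
  proj_weight d x j = clamp01 ((th j.+1 - x) / Delta) - clamp01 ((th j - x) / Delta).
Proof.
move=> x_gt x_lt; rewrite /proj_weight (lt_geF x_gt) (lt_geF x_lt) gridS.
have th_pred : (0 < j)%N -> th j.-1 = th j - Delta.
  by case: j => // j _; rewrite gridS addrK.
have th0_lt : j = 0%N -> th j < x by move->.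
move: th_pred th0_lt; set t := th j => th_pred th0_lt.
set y := (x - t) / Delta.
have x_eq : x = t + y * Delta by rewrite /y divfK ?gt_eqF //; ring.
clearbody t y; subst x.
have DeltaN0 : Delta != 0 by rewrite gt_eqF.
have -> : (t + Delta - (t + y * Delta)) / Delta = 1 - y by field.
have -> : (t - (t + y * Delta)) / Delta = - y by field.
have -> : (t <= t + y * Delta) = (0 <= y) by rewrite lerDl pmulr_lge0.
have -> : (t + y * Delta < t + Delta) = (y < 1).
  by rewrite ltrD2l -[X in _ < X]mul1r ltr_pM2r.
case: j th_pred th0_lt => [|j] th_pred th0_lt /=.
  have y_gt0 : 0 < y by have := th0_lt erefl; rewrite ltrDl pmulr_lgt0.
  by rewrite /clamp01; case_order_ifs; lra.
rewrite th_pred //.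
have -> : (t + y * Delta - (t - Delta)) / Delta = 1 + y by field.
have -> : (t - Delta <= t + y * Delta) = (-1 <= y).
  by rewrite lerD2l -[- Delta]mulN1r ler_pM2r.
have -> : (t + y * Delta < t) = (y < 0) by rewrite gtrDl pmulr_llt0.
by rewrite /clamp01; case_order_ifs; lra.
Qed.

Lemma proj_cdf d x (k : 'I_d) : (k.+1 < d)%N ->
  cdf (cproj_w theta0 Delta x) k = clamp01 ((th k.+1 - x) / Delta).
Proof.
move=> kd; transitivity (\sum_(j < k.+1) proj_weight d x j); first exact: cdf_nat.
have [x_le|x_gt] := leP x (th 0).
  rewrite big_ord_recl big1 => [|i _]; last by rewrite /proj_weight x_le.
  rewrite /proj_weight x_le eqxx addr0 clamp01_eq1 // ler_pdivlMr // mul1r.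
  by have := grid_le (ltn0Sn k); rewrite gridS; lra.
have [x_ge|x_lt] := leP (th d.-1) x.
  rewrite big1 => [|i _]; last first.
    rewrite /proj_weight (lt_geF x_gt) x_ge ltn_eqF //.
    by rewrite (leq_trans (ltn_ord i)) // -ltnS prednK // (ltn_trans _ kd).
  rewrite clamp01_eq0 // pmulr_lle0 ?invr_gt0 // subr_le0 (le_trans _ x_ge) //.
  by rewrite grid_le // -ltnS prednK // (ltn_trans _ kd).
under eq_bigr do rewrite proj_weight_interior //.
rewrite -(big_mkord xpredT (fun j => clamp01 ((th j.+1 - x) / Delta)
                                    - clamp01 ((th j - x) / Delta))).
rewrite telescope_sumr // [clamp01 ((th 0 - x) / Delta)]clamp01_eq0 ?subr0 //.
by rewrite pmulr_lle0 ?invr_gt0 // subr_le0 ltW.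
Qed.

Lemma cdf_Lb d b (u : 'I_d -> R) (k : 'I_d) : (k.+1 < d)%N ->
  cdf (Lb theta0 Delta b u) k
  = \sum_l u l * clamp01 ((th k.+1 - (th l + b)) / Delta).
Proof.
move=> kd; rewrite /cdf /Lb exchange_big; apply: eq_bigr => l _.
by rewrite -mulr_sumr -[X in _ * X = _]/(cdf _ k) proj_cdf.
Qed.

Lemma sum_sqr_clamp_kernel_le n b (e : nat -> R) : \sum_(l < n.+1) e l = 0 ->
  \sum_(k < n) (\sum_(l < n.+1) e l * clamp01 ((th k.+1 - (th l + b)) / Delta)) ^+ 2
  <= \sum_(k < n) (\sum_(j < k.+1) e j) ^+ 2.
Proof.
move=> e_sum0; set G := fun k l : nat => clamp01 ((th k.+1 - (th l + b)) / Delta).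
have abel k : \sum_(l < n.+1) e l * G k l
              = \sum_(l < n) (G k l - G k l.+1) * \sum_(j < l.+1) e j.
  by rewrite abel_summation e_sum0 mul0r add0r; apply: eq_bigr => l _; rewrite mulrC.
rewrite (eq_bigr (fun k : 'I_n =>
  (\sum_(l < n) (G k l - G k l.+1) * \sum_(j < l.+1) e j) ^+ 2)) => [|k _]; last by rewrite abel.
apply: (@schur_test_sqr R n (fun k l => G k l - G k l.+1) (fun l => \sum_(j < l.+1) e j))
  => [k l|k|l].
- rewrite subr_ge0 le_clamp01 // ler_pM2r ?invr_gt0 //.
  by have := grid_le (leqnSn l); lra.
- rewrite -(big_mkord xpredT (fun l => G k l - G k l.+1)).
  have -> : \sum_(0 <= l < n) (G k l - G k l.+1) = G k 0%N - G k n.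
    by rewrite -opprB -telescope_sumr // -sumrN; apply: eq_bigr => l _; rewrite opprB.
  exact: clamp01_sub_le1.
- have G_shift k : G k l.+1 = clamp01 ((th k - (th l + b)) / Delta).
    by rewrite /G !gridS; congr (clamp01 (_ / _)); ring.
  under eq_bigr do rewrite G_shift.
  rewrite -(big_mkord xpredT (fun k => G k l - clamp01 ((th k - (th l + b)) / Delta))).
  rewrite (telescope_sumr (fun k => clamp01 ((th k - (th l + b)) / Delta))) //.
  exact: clamp01_sub_le1.
Qed.

Lemma cramer_sq_Lb d b (u v : 'I_d -> R) : \sum_l u l = \sum_l v l ->
  cramer_sq (Lb theta0 Delta b u) (Lb theta0 Delta b v) <= cramer_sq u v.
Proof.
case: d u v => [|n] u v uv; first by rewrite /cramer_sq !big_ord0.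
set e := fun j : nat => u (inord j) - v (inord j).
have e_ord (l : 'I_n.+1) : u l - v l = e l by rewrite /e inord_val.
set shifted := fun k : nat =>
  (\sum_(l < n.+1) e l * clamp01 ((th k.+1 - (th l + b)) / Delta)) ^+ 2.
set unshifted := fun k : nat => (\sum_(j < k.+1) e j) ^+ 2.
rewrite /cramer_sq (eq_bigr (fun k : 'I_n.+1 => shifted k)) => [|k kn]; last first.
  rewrite !cdf_Lb // -sumrB; congr (_ ^+ 2).
  by apply: eq_bigr => l _; rewrite -mulrBl e_ord.
rewrite [X in _ <= X](eq_bigr (fun k : 'I_n.+1 => unshifted k)) => [|k _].
  rewrite -!(big_ord_widen _ _ (leqnSn n)); apply: sum_sqr_clamp_kernel_le.
  by rewrite -(eq_bigr _ (fun l _ => e_ord l)) sumrB uv subrr.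
rewrite /cdf -sumrB (eq_bigr (fun j : 'I_n.+1 => e j)) => [|j _]; last exact: e_ord.
by rewrite -[X in X ^+ 2]/(cdf (fun j : 'I_n.+1 => e j) k) cdf_nat.
Qed.

End CategoricalProjection.

Lemma prob_vec_le1 (R : realType) (n : nat) (u : 'I_n -> R) :
  prob_vec u -> forall i, 0 <= u i <= 1.
Proof.
case=> u_ge0 u_sum1 i; rewrite u_ge0 -u_sum1 (bigD1 i) //= lerDl.
by apply: sumr_ge0 => j _.
Qed.

Section MeanField.
Variables (R : realType) (m d : nat) (theta0 Delta : R) (P : 'M[R]_m).
Variables (nuf : 'I_m -> 'I_m -> R -> R) (nus : 'I_m -> 'I_m -> seq R).
Variable rho : 'I_m -> R.
Hypothesis P_stochastic : stochastic P.
Hypothesis nu_law : forall i j, fin_law (nuf i j) (nus i j).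
Local Notation G := (Gop theta0 Delta P nuf nus).
Local Notation h := (hrho theta0 Delta P nuf nus rho).

Lemma GopE (p : 'I_m -> 'I_d -> R) i k :
  G p i k = \sum_j P i j * \sum_(b <- nus i j) nuf i j b * Lb theta0 Delta b (p j) k.
Proof.
apply: eq_bigr => j _; congr (_ * _); apply: eq_bigr => b _.
by rewrite /Lb mulr_sumr; apply: eq_bigr => l _; rewrite addrC mulrA.
Qed.

Lemma EH_hrho qY sY (p : 'I_m -> 'I_d -> R) u k : Y_law rho P nuf qY sY ->
  EH theta0 Delta qY sY p u k = h p u k.
Proof.
case=> sY_uniq qY_out _ qY_sum1 qYE.
set g := fun y => qY y * (Hbackup theta0 Delta p y u k - p u k).
have EH_incr : EH theta0 Delta qY sY p u k = p u k + \sum_(y <- sY) g y.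
  rewrite /EH (eq_bigr (fun y => p u k * qY y + g y)) => [|y _]; last by rewrite /g; ring.
  by rewrite big_split /= -mulr_sumr qY_sum1 mulr1.
set T := [seq (u, b, j) | j <- index_enum 'I_m, b <- nus u j].
have g_supp : \sum_(y <- sY) g y = \sum_(y <- T) g y.
  apply: big_uniq_supp => // [|y /qY_out|[[s b] j] yT].
  - apply: allpairs_uniq_dep => [||[j1 b1] [j2 b2] _ _ /= [-> ->]] //.
      exact: index_enum_uniq.
    by move=> j _; case: (nu_law u j).
  - by rewrite /g => ->; rewrite mul0r.
  - rewrite /g /Hbackup; have [us|_] := eqVneq u s; last by rewrite subrr mulr0.
    subst s; case: (nu_law u j) => _ nuf_out _ _.
    rewrite qYE nuf_out ?mulr0 ?mul0r //; apply: contra yT => bn.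
    by apply/allpairsPdep; exists j, b; rewrite mem_index_enum.
have g_sum : \sum_(y <- T) g y = rho u * (G p u k - p u k).
  rewrite big_allpairs_dep /= GopE; transitivity (\sum_j rho u * P u j *
    (\sum_(b <- nus u j) nuf u j b * Lb theta0 Delta b (p j) k - p u k)).
    apply: eq_bigr => j _; case: (nu_law u j) => _ _ _ nuf_sum1.
    have -> : p u k = \sum_(b <- nus u j) nuf u j b * p u k.
      by rewrite -mulr_suml nuf_sum1 mul1r.
    rewrite -sumrB mulr_sumr; apply: eq_bigr => b _.
    by rewrite /g /Hbackup eqxx qYE; ring.
  rewrite [in RHS](_ : p u k = \sum_j P u j * p u k); last first.
    by rewrite -mulr_suml (proj2 P_stochastic u) mul1r.
  by rewrite -sumrB mulr_sumr; apply: eq_bigr => j _; ring.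
by rewrite EH_incr g_supp g_sum /hrho; ring.
Qed.

Lemma is_fix_hrho (p : 'I_m -> 'I_d -> R) : (forall i, 0 < rho i) ->
  is_fix h p <-> is_fix G p.
Proof.
move=> rho_gt0; split => fix_p i k; have := fix_p i k; rewrite /hrho; last by move->; ring.
move=> /eqP; rewrite -subr_eq0 (_ : _ - _ = rho i * (G p i k - p i k)); last by ring.
by rewrite mulf_eq0 gt_eqF //= subr_eq0 => /eqP.
Qed.

Hypothesis Delta_gt0 : 0 < Delta.

Lemma cramer_sq_Gop_le (p q : 'I_m -> 'I_d -> R) B :
  (forall j, \sum_l p j l = \sum_l q j l) -> (forall j, cramer_sq (p j) (q j) <= B) ->
  forall i, cramer_sq (G p i) (G q i) <= B.
Proof.
move=> pq_mass pq_le i; have [P_ge0 P_sum1] := P_stochastic.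
pose mix (r : 'I_m -> 'I_d -> R) j k :=
  \sum_(b <- nus i j) nuf i j b * Lb theta0 Delta b (r j) k.
have mix_le j : cramer_sq (mix p j) (mix q j) <= B.
  have [_ _ nuf_ge0 nuf_sum1] := nu_law i j.
  apply: (@le_trans _ _ (\sum_(b <- nus i j) nuf i j b *
            cramer_sq (Lb theta0 Delta b (p j)) (Lb theta0 Delta b (q j)))).
    by apply: cramer_sq_mixture_le => //; rewrite nuf_sum1.
  rewrite -[X in _ <= X]mul1r -nuf_sum1 mulr_suml; apply: ler_sum => b _.
  by rewrite ler_wpM2l // (le_trans (cramer_sq_Lb _ _ _ _)).
apply: (@le_trans _ _ (\sum_j P i j * cramer_sq (mix p j) (mix q j))).
  by apply: cramer_sq_mixture_le => // [|k|k]; rewrite ?P_sum1 ?GopE.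
rewrite -[X in _ <= X]mul1r -(P_sum1 i) mulr_suml; apply: ler_sum => j _.
exact: ler_wpM2l.
Qed.

Lemma cramer_sq_hrho_le (p q : 'I_m -> 'I_d -> R) B : (forall i, 0 <= rho i <= 1) ->
  (forall j, \sum_l p j l = \sum_l q j l) -> (forall j, cramer_sq (p j) (q j) <= B) ->
  forall i, cramer_sq (h p i) (h q i) <= B.
Proof.
move=> rho01 pq_mass pq_le i; have /andP[rho_ge0 rho_le1] := rho01 i.
have rhoC_ge0 : 0 <= 1 - rho i by rewrite subr_ge0.
pose w (c : bool) := if c then rho i else 1 - rho i.
apply: (@le_trans _ _ (\sum_(c <- [:: false; true])
  w c * cramer_sq (if c then G p i else p i) (if c then G q i else q i))).
  apply: cramer_sq_mixture_le => [c|||] *; rewrite ?big_cons ?big_nil /w /=;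
    by [case: c | lra | rewrite addr0].
rewrite !big_cons big_nil addr0 /w /=.
have := ler_wpM2l rho_ge0 (cramer_sq_Gop_le pq_mass pq_le i).
have := ler_wpM2l rhoC_ge0 (pq_le i).
lra.
Qed.

Lemma hrho_nonexpansive (p q : 'I_m -> 'I_d -> R) :
  prob_vec rho -> simplexS p -> simplexS q -> lCinf Delta (h p) (h q) <= lCinf Delta p q.
Proof.
move=> rho_prob p_simplex q_simplex; apply: lCinf_le => // B.
apply: cramer_sq_hrho_le; first exact: prob_vec_le1.
by move=> j; rewrite (proj2 (p_simplex j)) (proj2 (q_simplex j)).
Qed.

Lemma prop5_concl_of_gt0 : prob_vec rho -> (forall i, 0 < rho i) ->
  prop5_concl d theta0 Delta P nuf nus rho.
Proof.
move=> rho_prob rho_gt0; split=> [qY sY Y_qY p _ u k|p q|p _].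
- exact: EH_hrho.
- exact: hrho_nonexpansive.
- exact: is_fix_hrho.
Qed.

End MeanField.

Section StationaryDistribution.
Variables (R : realType) (m : nat) (P : 'M[R]_m) (mu : 'I_m -> R).

Lemma mxpowSE n i j : (P ^+ n.+1) i j = \sum_k (P ^+ n) i k * P k j.
Proof. by rewrite exprSr -mulmxE mxE. Qed.

Lemma stochastic_mxpow_ge0 n i j : stochastic P -> 0 <= (P ^+ n) i j.
Proof.
case=> P_ge0 _; elim: n i j => [|n IHn] i j; first by rewrite expr0 mxE ler0n.
by rewrite mxpowSE; apply: sumr_ge0 => k _; rewrite mulr_ge0.
Qed.

Lemma stationary_mxpow n j : stationary P mu -> \sum_i mu i * (P ^+ n) i j = mu j.
Proof.
case=> _ mu_inv; elim: n j => [|n IHn] j.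
  rewrite (bigD1 j) //= expr0 mxE eqxx mulr1 big1 ?addr0 // => i /negbTE ij.
  by rewrite mxE ij mulr0.
rewrite -mu_inv; under eq_bigr do rewrite mxpowSE mulr_sumr.
rewrite exchange_big; apply: eq_bigr => k _; rewrite -IHn mulr_suml.
by apply: eq_bigr => i _; rewrite mulrA.
Qed.

(* Some state has positive mass, and irreducibility carries it to every state. *)
Lemma stationary_gt0 : stochastic P -> irreducible P -> stationary P mu ->
  forall i, 0 < mu i.
Proof.
move=> P_stoch P_irr mu_stat j; have [[mu_ge0 mu_sum1] _] := mu_stat.
have [i0 mu_i0_gt0] : exists i0, 0 < mu i0.
  apply/existsP; apply: contraT; rewrite negb_exists => /forallP mu_le0.
  suff: \sum_i mu i = 0 by rewrite mu_sum1 => /eqP; rewrite oner_eq0.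
  by apply: big1 => i _; apply/eqP; rewrite eq_le mu_ge0 andbT leNgt mu_le0.
have [n Pn_gt0] := P_irr i0 j.
rewrite -(stationary_mxpow n j mu_stat) (bigD1 i0) //=.
rewrite ltr_pwDl ?mulr_gt0 // sumr_ge0 // => i _.
by rewrite mulr_ge0 ?stochastic_mxpow_ge0.
Qed.

End StationaryDistribution.

Lemma fin_law_nu (R : realType) (f : R -> R) (s : seq R) (r : R) :
  fin_law f s -> fin_law (nu_mass f r) (nu_supp s r).
Proof.
case=> s_uniq f_out f_ge0 f_sum1; split => [||b|].
- by rewrite map_inj_uniq // => x y /addIr.
- move=> b b_out; apply: f_out; apply: contra b_out => b_s.
  by rewrite -[b](addrK r); exact: map_f.
- exact: f_ge0.
- by rewrite /nu_supp big_map -f_sum1; apply: eq_bigr => x _; rewrite /nu_mass subrK.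
Qed.

Theorem proposition5 (R : realType) (m d : nat) (theta0 Delta : R)
  (P : 'M[R]_m) (mu : 'I_m -> R)
  (f : 'I_m -> 'I_m -> R -> R) (s : 'I_m -> 'I_m -> seq R) :
  0 < Delta ->
  stochastic P -> irreducible P -> aperiodic P -> stationary P mu ->
  (forall i j, fin_law (f i j) (s i j)) ->
  (forall i j x, x \in s i j -> 0 <= x <= 1) ->
  let rbar := gain P mu f s in
  let nuf := fun i j => nu_mass (f i j) rbar in
  let nus := fun i j => nu_supp (s i j) rbar in
  (forall rho : 'I_m -> R, prob_vec rho -> (forall i, 0 < rho i) ->
     prop5_concl d theta0 Delta P nuf nus rho)
  /\ prop5_concl d theta0 Delta P nuf nus mu.
Proof.
move=> Delta_gt0 P_stoch P_irr _ mu_stat f_law _ rbar nuf nus.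
have nu_law i j : fin_law (nuf i j) (nus i j) by exact: fin_law_nu.
have concl rho : prob_vec rho -> (forall i, 0 < rho i) ->
    prop5_concl d theta0 Delta P nuf nus rho.
  exact: prop5_concl_of_gt0.
split; first exact: concl.
by apply: concl; [case: mu_stat | exact: stationary_gt0 P_stoch P_irr mu_stat].
Qed.
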